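(* Let $G=(\mathcal{V},\mathcal{E})$ be a hypergraph, $P$ a pmf on $\mathcal{V}$, and $L\ge1$ an integer. Then: (i) for all $\ell\in[L+1]$, $0\le\theta^{(\ell)}_{L+1}(G,P)\le I_{L+1}(G,P)$; (ii) $0\le I_{L+1}(G,P)\le H_{L+1}(P)$; moreover $I_{L+1}(G,P)=0$ if and only if no $e\subseteq\mathrm{supp}(P)$ with $2\le|e|\le L+1$ is in $\mathcal{E}$, and $I_{L+1}(G,P)=H_{L+1}(P)$ if and only if every $e\subseteq\mathrm{supp}(P)$ with $2\le|e|\le L+1$ is in $\mathcal{E}$; (iii) for every integer $n\ge2$ and all $\ell\in[L+1]$, $\theta^{(\ell)}_{L+1}(G^n,P^n)=n\,\theta^{(\ell)}_{L+1}(G,P)$, where $P^n(v^n)=\prod_{t\in[n]}P(v_t)$ (in particular $I_{L+1}(G^n,P^n)=nI_{L+1}(G,P)$).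
   Context: Notation: $[j]=\{1,\dots,j\}$, $[i:j]=\{i,\dots,j\}$; $\log$ is base 2. A hypergraph $G=(\mathcal{V},\mathcal{E})$ has a finite vertex set $\mathcal{V}$ and edge set $\mathcal{E}\subseteq 2^{\mathcal{V}}$ with every edge of cardinality at least 2. The $n$th co-normal power $G^n$ has vertex set $\mathcal{V}^n$, and a set $\{v_1^n,\dots,v_k^n\}\subseteq\mathcal{V}^n$ of $k\ge2$ distinct elements is an edge iff for some $t\in[n]$, $\{v_{1t},\dots,v_{kt}\}\in\mathcal{E}$. For $v_{[k]}=(v_1,\dots,v_k)\in\mathcal{V}^k$ let $\sigma(v_{[k]})=\{v_1,\dots,v_k\}$, and for $S\subseteq[k]$, $v_S=(v_j)_{j\in S}$, $P(v_S)=\prod_{j\in S}P(v_j)$. Define $I_{L+1}(G,P):=-\frac1L\log\sum_{v_{[L+1]}\in\mathcal{V}^{L+1}:\,\sigma(v_{[L+1]})\notin\mathcal{E}}P(v_{[L+1]})$, $\theta^{(L+1)}_{L+1}(G,P):=I_{L+1}(G,P)$, and for $\ell\in[L]$, $\theta^{(\ell)}_{L+1}(G,P):=2I_{L+1}(G,P)+\frac1L\log\sum_{v_{[\ell]}\in\mathcal{V}^{\ell}}P(v_{[\ell]})\Big[\sum_{v_{[\ell+1:L+1]}\in\mathcal{V}^{L+1-\ell}:\,\sigma(v_{[L+1]})\notin\mathcal{E}}P(v_{[\ell+1:L+1]})\Big]^2$. The Rényi entropy of order $\alpha\ge2$ (integer) is $H_\alpha(P)=-\frac{1}{\alpha-1}\log\sum_{v}P(v)^\alpha$.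 *)

From Stdlib Require Import Reals.
From mathcomp Require Import all_boot.
Delimit Scope R_scope with Re.
Set Implicit Arguments. Unset Strict Implicit. Unset Printing Implicit Defensive.

Definition log2 (x : R) : R := Rdiv (ln x) (ln 2%Re).

Section Defs.
Variable V : finType.

Definition is_hypergraph (E : {set {set V}}) : Prop :=
  forall e, e \in E -> 1 < #|e|.

Definition is_pmf (P : V -> R) : Prop :=
  (forall v, 0 <= P v)%Re /\ \big[Rplus/0%Re]_(v : V) P v = 1%Re.

Definition supp (P : V -> R) : {set V} := [set v | (if Rlt_dec 0 (P v) then true else false)].

Definition sigma k (f : {ffun 'I_k -> V}) : {set V} := [set f i | i : 'I_k].

Definition Ptup (P : V -> R) k (f : {ffun 'I_k -> V}) : R :=
  \big[Rmult/1%Re]_(i : 'I_k) P (f i).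

Definition I_L1 (E : {set {set V}}) (P : V -> R) (L : nat) : R :=
  (- / INR L * log2 (\big[Rplus/0%Re]_(f : {ffun 'I_L.+1 -> V} | sigma f \notin E)
                        Ptup P f))%Re.

(* theta^{(l)}_{L+1}(G,P) for l in [L]: the tuple v_[L+1] is the
   concatenation of the prefix a = v_[l] and the suffix b = v_[l+1:L+1]. *)
Definition theta_aux (E : {set {set V}}) (P : V -> R) (L l : nat) : R :=
  (2 * I_L1 E P L + / INR L *
     log2 (\big[Rplus/0%Re]_(a : {ffun 'I_l -> V})
             (Ptup P a *
              (\big[Rplus/0%Re]_(b : {ffun 'I_(L.+1 - l) -> V}
                                  | (sigma a :|: sigma b) \notin E) Ptup P b) ^ 2)))%Re.

Definition theta (E : {set {set V}}) (P : V -> R) (L l : nat) : R :=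
  if l == L.+1 then I_L1 E P L else theta_aux E P L l.

Definition renyi (P : V -> R) (alpha : nat) : R :=
  (- / INR (alpha - 1) * log2 (\big[Rplus/0%Re]_(v : V) P v ^ alpha))%Re.

Definition conormal_power (E : {set {set V}}) (n : nat)
  : {set {set {ffun 'I_n -> V}}} :=
  [set S : {set {ffun 'I_n -> V}} |
     (1 < #|S|) && [exists t : 'I_n, [set f t | f : {ffun 'I_n -> V} in S] \in E]].

Definition pow_pmf (P : V -> R) (n : nat) : {ffun 'I_n -> V} -> R :=
  fun f => Ptup P f.
End Defs.
Arguments pow_pmf {V} P n _.
Arguments conormal_power {V} E n.

From Pilot Require Import Defs.
From Stdlib Require Import Reals Lra.
From mathcomp Require Import all_boot Rstruct.

(* Write [s] for the mass of the (L+1)-tuples whose vertex set is not an edge,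
   so that [I_{L+1} = -(1/L) log s].  Splitting a tuple into a prefix [a] and
   a suffix, [s] is the mean over [a] of the conditional mass [g a] of the
   suffixes that keep the union a non-edge, and [theta] compares [s^2] with the
   second moment of [g].  Jensen's inequality and [0 <= g <= 1] give
   [s^2 <= E[g^2] <= s], which is (i).  For (ii), [1 - s] is the mass of the
   tuples spanning an edge, and [s] minus the mass of the constant tuples,
   [sum_v P(v)^(L+1)], is the mass of the non-constant tuples spanning a
   non-edge; a mass vanishes iff no tuple with vertices in [supp P] contributes
   to it, and every small enough subset of [supp P] is spanned by a tuple.  For
   (iii), a set of vectors is a non-edge of [G^n] iff each of its coordinate
   projections is a non-edge of [G], so both masses factorize over the [n]
   coordinates and become [n]-th powers. *)

Set Implicit Arguments. Unset Strict Implicit. Unset Printing Implicit Defensive.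

(* Stdlib's [Rsigma.sigma] would otherwise shadow the vertex set of a tuple. *)
Local Notation sigma := Defs.sigma.

Section RealBigops.
Local Open Scope R_scope.
Variable I : finType.
Implicit Types (p : pred I) (F G w g : I -> R).

Lemma Rsum_ge0 p F : (forall i, p i -> 0 <= F i) -> 0 <= \big[Rplus/0]_(i | p i) F i.
Proof. by move=> F_ge0; apply: (big_ind (fun x => 0 <= x)) => //; [lra | move=> x y; lra]. Qed.

Lemma Rsum_le p F G :
  (forall i, p i -> F i <= G i) ->
  \big[Rplus/0]_(i | p i) F i <= \big[Rplus/0]_(i | p i) G i.
Proof. by move=> FG; apply: (big_ind2 (fun x y => x <= y)) => //; [lra | move=> *; lra]. Qed.

Lemma Rprod_ge0 p F : (forall i, p i -> 0 <= F i) -> 0 <= \big[Rmult/1]_(i | p i) F i.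
Proof. by move=> F_ge0; apply: (big_ind (fun x => 0 <= x)) => //; [lra | move=> x y; nra]. Qed.

Lemma Rprod_gt0 p F : (forall i, p i -> 0 < F i) -> 0 < \big[Rmult/1]_(i | p i) F i.
Proof. by move=> F_gt0; apply: (big_ind (fun x => 0 < x)) => //; [lra | move=> x y; nra]. Qed.

Lemma Rsum_le_full p F :
  (forall i, 0 <= F i) -> \big[Rplus/0]_(i | p i) F i <= \big[Rplus/0]_i F i.
Proof.
move=> F_ge0; rewrite [X in X <= _]big_mkcond; apply: Rsum_le => i _.
by case: (p i); [apply: Rle_refl | apply: F_ge0].
Qed.

Lemma Rsum_ge_term p F j :
  (forall i, p i -> 0 <= F i) -> p j -> F j <= \big[Rplus/0]_(i | p i) F i.
Proof.
move=> F_ge0 pj; rewrite (bigD1 j) //=.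
have : 0 <= \big[Rplus/0]_(i | p i && (i != j)) F i.
  by apply: Rsum_ge0 => i /andP[]; auto.
lra.
Qed.

Lemma Rsum_gt0 p F j :
  (forall i, p i -> 0 <= F i) -> p j -> 0 < F j -> 0 < \big[Rplus/0]_(i | p i) F i.
Proof. by move=> F_ge0 pj Fj_gt0; apply: Rlt_le_trans (Rsum_ge_term F_ge0 pj). Qed.

Lemma Rsum_eq0P p F :
  (forall i, p i -> 0 <= F i) ->
  \big[Rplus/0]_(i | p i) F i = 0 <-> forall i, p i -> F i = 0.
Proof.
move=> F_ge0; split=> [F0 i pi | F0]; last exact: big1.
by have := Rsum_ge_term F_ge0 pi; have := F_ge0 i pi; lra.
Qed.

Lemma Rprod_if (b : pred I) F :
  \big[Rmult/1]_i (if b i then F i else 0) =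
  if [forall i, b i] then \big[Rmult/1]_i F i else 0.
Proof.
case: (boolP [forall i, b i]) => [/forallP b_all | /forallPn [i /negbTE bi]].
  by apply: eq_bigr => i _; rewrite b_all.
by rewrite (bigD1 i) //= bi Rmult_0_l.
Qed.

Lemma Rprod_const n (x : R) : \big[Rmult/1]_(t < n) x = x ^ n.
Proof. by rewrite big_const_ord; elim: n => //= n ->. Qed.

(* The variance of [g] under the weights [w] is [E[g^2] - E[g]^2 >= 0]. *)
Lemma mean_sq_bounds w g :
  (forall i, 0 <= w i) -> \big[Rplus/0]_i w i = 1 -> (forall i, 0 <= g i <= 1) ->
  (\big[Rplus/0]_i (w i * g i)) ^ 2 <= \big[Rplus/0]_i (w i * g i ^ 2) /\
  \big[Rplus/0]_i (w i * g i ^ 2) <= \big[Rplus/0]_i (w i * g i).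
Proof.
move=> w_ge0 w_sum1 g01; set m := \big[Rplus/0]_i (w i * g i).
split; last first.
  by apply: Rsum_le => i _; apply: Rmult_le_compat_l => //; have := g01 i; rewrite /=; nra.
have var_ge0 : 0 <= \big[Rplus/0]_i (w i * (g i - m) ^ 2).
  by apply: Rsum_ge0 => i _; apply: Rmult_le_pos; [exact: w_ge0 | apply: pow2_ge_0].
have varE : \big[Rplus/0]_i (w i * (g i - m) ^ 2) =
    \big[Rplus/0]_i (w i * g i ^ 2) + (- 2 * m) * \big[Rplus/0]_i (w i * g i)
    + m ^ 2 * \big[Rplus/0]_i w i.
  rewrite (big_distrr (- 2 * m)) (big_distrr (m ^ 2)) -!big_split /=.
  by apply: eq_bigr => i _; ring.
rewrite w_sum1 -/m in varE; lra.
Qed.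

End RealBigops.

Section Log2.
Local Open Scope R_scope.

Lemma ln2_gt0 : 0 < ln 2.
Proof. by have := ln_lt_2; lra. Qed.

Lemma log2_le x y : 0 < x -> x <= y -> log2 x <= log2 y.
Proof.
move=> x_gt0 xy; apply: Rmult_le_compat_r; first exact/Rlt_le/Rinv_0_lt_compat/ln2_gt0.
by case: (Rle_lt_or_eq_dec _ _ xy) => [/(ln_increasing _ _ x_gt0)/Rlt_le | ->]; last lra.
Qed.

Lemma log2_inj x y : 0 < x -> 0 < y -> log2 x = log2 y -> x = y.
Proof.
move=> x_gt0 y_gt0 eq_log; apply: ln_inv => //; apply: (Rmult_eq_reg_r (/ ln 2)) => //.
exact/Rgt_not_eq/Rinv_0_lt_compat/ln2_gt0.
Qed.

Lemma log2_pow x n : 0 < x -> log2 (x ^ n) = INR n * log2 x.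
Proof. by move=> x_gt0; rewrite /log2 ln_pow // /Rdiv Rmult_assoc. Qed.

Lemma log2_1 : log2 1 = 0.
Proof. by rewrite /log2 ln_1 /Rdiv Rmult_0_l. Qed.

Lemma log2_le0 x : 0 < x -> x <= 1 -> log2 x <= 0.
Proof. by move=> x_gt0 x_le1; rewrite -log2_1; apply: log2_le. Qed.

Lemma scaled_log2_eqP c x y : c <> 0 -> 0 < x -> 0 < y -> c * log2 x = c * log2 y <-> x = y.
Proof.
move=> c_neq0 x_gt0 y_gt0; split=> [eq_log | -> //].
by apply: log2_inj => //; apply: Rmult_eq_reg_l eq_log c_neq0.
Qed.

End Log2.

Section Tuples.
Local Open Scope R_scope.
Variables (V : finType) (P : V -> R).
Hypothesis P_ge0 : forall v, 0 <= P v.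
Hypothesis P_sum1 : \big[Rplus/0]_v P v = 1.

Lemma in_supp v : v \in supp P <-> 0 < P v.
Proof. by rewrite /supp inE; case: Rlt_dec. Qed.

Lemma exists_P_gt0 : exists v, 0 < P v.
Proof.
have [supp0 | [v /in_supp]] := set_0Vmem (supp P); last by exists v.
have : \big[Rplus/0]_v P v <= \big[Rplus/0]_(v : V) 0.
  by apply: Rsum_le => v _; apply: Rnot_lt_le => /in_supp; rewrite supp0 inE.
by rewrite P_sum1 big1 //; lra.
Qed.

Lemma Ptup_ge0 k (f : {ffun 'I_k -> V}) : 0 <= Ptup P f.
Proof. exact: Rprod_ge0. Qed.

Lemma Ptup_gt0 k (f : {ffun 'I_k -> V}) : sigma f \subset supp P -> 0 < Ptup P f.
Proof. by move=> /subsetP f_supp; apply: Rprod_gt0 => i _; apply/in_supp/f_supp/imset_f. Qed.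

Lemma Ptup_eq0 k (f : {ffun 'I_k -> V}) : Ptup P f = 0 <-> ~~ (sigma f \subset supp P).
Proof.
split=> [Pf0 | /subsetPn [x /imsetP [i _ ->] /negP fi_supp]].
  by apply/negP => /Ptup_gt0; lra.
have Pfi0 : P (f i) = 0 by have := P_ge0 (f i); move: fi_supp => /in_supp; lra.
by rewrite /Ptup (bigD1 i) //= Pfi0 Rmult_0_l.
Qed.

Lemma sum_Ptup k : \big[Rplus/0]_(f : {ffun 'I_k -> V}) Ptup P f = 1.
Proof. by rewrite /Ptup -(bigA_distr_bigA (fun _ : 'I_k => P)) big1. Qed.

Lemma Ptup_const k (v : V) : Ptup P [ffun _ : 'I_k => v] = P v ^ k.
Proof.
rewrite /Ptup (eq_bigr (fun _ => P v)) => [|i _]; last by rewrite ffunE.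
by rewrite big_const_ord; elim: k => //= k ->.
Qed.

Definition ffun_cat l k (a : {ffun 'I_l -> V}) (b : {ffun 'I_k -> V})
    : {ffun 'I_(l + k) -> V} :=
  [ffun i => match split i with inl j => a j | inr j => b j end].

Lemma ffun_cat_lshift l k (a : {ffun 'I_l -> V}) (b : {ffun 'I_k -> V}) j :
  ffun_cat a b (lshift k j) = a j.
Proof. by rewrite ffunE (unsplitK (inl j) : split (lshift k j) = inl j). Qed.

Lemma ffun_cat_rshift l k (a : {ffun 'I_l -> V}) (b : {ffun 'I_k -> V}) j :
  ffun_cat a b (rshift l j) = b j.
Proof. by rewrite ffunE (unsplitK (inr j) : split (rshift l j) = inr j). Qed.

Lemma Ptup_cat l k (a : {ffun 'I_l -> V}) (b : {ffun 'I_k -> V}) :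
  Ptup P (ffun_cat a b) = Ptup P a * Ptup P b.
Proof.
by rewrite /Ptup big_split_ord; congr Rmult; apply: eq_bigr => j _;
  rewrite ?ffun_cat_lshift ?ffun_cat_rshift.
Qed.

Lemma sigma_cat l k (a : {ffun 'I_l -> V}) (b : {ffun 'I_k -> V}) :
  sigma (ffun_cat a b) = sigma a :|: sigma b.
Proof.
apply/setP => x; rewrite inE; apply/imsetP/orP => [[i _ ->] | [] /imsetP [j _ ->]].
- by rewrite ffunE; case: (split i) => j; [left | right]; apply: imset_f.
- by exists (lshift k j); rewrite ?ffun_cat_lshift.
- by exists (rshift l j); rewrite ?ffun_cat_rshift.
Qed.

Lemma big_ffun_cat (T : Type) (idx : T) (op : Monoid.com_law idx) l k
    (F : {ffun 'I_(l + k) -> V} -> T) :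
  \big[op/idx]_(f : {ffun 'I_(l + k) -> V}) F f =
  \big[op/idx]_(a : {ffun 'I_l -> V}) \big[op/idx]_(b : {ffun 'I_k -> V}) F (ffun_cat a b).
Proof.
rewrite pair_bigA (reindex (fun ab => ffun_cat ab.1 ab.2)) //.
exists (fun f : {ffun _ -> V} => ([ffun j => f (lshift k j)], [ffun j => f (rshift l j)]))
  => [[a b] _ | f _].
  by congr pair; apply/ffunP => j; rewrite ffunE ?ffun_cat_lshift ?ffun_cat_rshift.
apply/ffunP => i; rewrite ffunE /=.
by have := splitK i; case: (split i) => j /= <-; rewrite ffunE.
Qed.

Lemma card_sigma N (f : {ffun 'I_N -> V}) : (#|sigma f| <= N)%N.
Proof. by apply: leq_trans (leq_imset_card _ _) _; rewrite card_ord. Qed.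

Lemma sigma_const k (v : V) : sigma [ffun _ : 'I_k => v] \subset [set v].
Proof. by apply/subsetP => x /imsetP [i _ ->]; rewrite ffunE inE. Qed.

Lemma Ptup_const_gt0 k (v : V) : 0 < P v -> 0 < Ptup P [ffun _ : 'I_k => v].
Proof.
move=> /in_supp Pv_gt0; apply: Ptup_gt0; apply: subset_trans (sigma_const _ _) _.
by rewrite sub1set.
Qed.

Lemma sigma_le1_const N (f : {ffun 'I_N.+1 -> V}) :
  (#|sigma f| <= 1)%N -> f = [ffun _ => f ord0].
Proof.
move=> /card_le1_eqP sigma_le1; apply/ffunP => i; rewrite ffunE.
by apply: sigma_le1; apply: imset_f.
Qed.

Lemma sigma_onto N (e : {set V}) : (0 < #|e| <= N)%N -> exists f : {ffun 'I_N -> V}, sigma f = e.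
Proof.
move=> /andP [e_gt0 e_le_N]; have /card_gt0P [x0 _] := e_gt0.
exists [ffun i : 'I_N => nth x0 (enum e) (i %% #|e|)].
apply/setP => x; apply/imsetP/idP => [[i _ ->] | xe].
  by rewrite ffunE -mem_enum mem_nth // -cardE ltn_pmod.
have ix_lt : (index x (enum e) < #|e|)%N by rewrite cardE index_mem mem_enum.
exists (Ordinal (leq_trans ix_lt e_le_N)) => //.
by rewrite ffunE /= modn_small // nth_index ?mem_enum.
Qed.

Lemma forall_sigmaP N (Q : pred {set V}) :
  (forall f : {ffun 'I_N -> V}, sigma f \subset supp P -> (1 < #|sigma f|)%N -> Q (sigma f)) <->
  (forall e : {set V}, e \subset supp P -> (2 <= #|e| <= N)%N -> Q e).
Proof.
split=> [Q_sigma e e_supp /andP [e_ge2 e_le_N] | Q_sets f f_supp f_gt1].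
  have [|f sigma_f] := @sigma_onto N e; first by rewrite e_le_N andbT ltnW.
  by rewrite -sigma_f; apply: Q_sigma; rewrite sigma_f.
by apply: Q_sets => //; rewrite f_gt1 card_sigma.
Qed.

Lemma mass_eq0P N (p : pred {set V}) :
  \big[Rplus/0]_(f : {ffun 'I_N -> V} | p (sigma f)) Ptup P f = 0 <->
  forall f : {ffun 'I_N -> V}, sigma f \subset supp P -> ~~ p (sigma f).
Proof.
rewrite Rsum_eq0P => [|f _]; last exact: Ptup_ge0.
split=> [mass0 f f_supp | no_f f pf]; last first.
  by apply/Ptup_eq0/negP => /no_f; rewrite pf.
by apply/negP => /mass0 /Ptup_eq0; rewrite f_supp.
Qed.

End Tuples.

Section NonedgeMass.
Local Open Scope R_scope.
Variables (V : finType) (E : {set {set V}}) (P : V -> R).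
Hypothesis E_hyper : is_hypergraph E.
Hypothesis P_ge0 : forall v, 0 <= P v.
Hypothesis P_sum1 : \big[Rplus/0]_v P v = 1.

Definition nonedge_mass N :=
  \big[Rplus/0]_(f : {ffun 'I_N -> V} | sigma f \notin E) Ptup P f.

Definition edge_mass N :=
  \big[Rplus/0]_(f : {ffun 'I_N -> V} | sigma f \in E) Ptup P f.

Definition multi_nonedge_mass N :=
  \big[Rplus/0]_(f : {ffun 'I_N -> V} | (sigma f \notin E) && (1 < #|sigma f|)%N) Ptup P f.

Definition nonedge_ext_mass l k (a : {ffun 'I_l -> V}) :=
  \big[Rplus/0]_(b : {ffun 'I_k -> V} | (sigma a :|: sigma b) \notin E) Ptup P b.

Definition nonedge_mass2 l k :=
  \big[Rplus/0]_(a : {ffun 'I_l -> V}) (Ptup P a * nonedge_ext_mass k a ^ 2).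

Lemma small_notin (S : {set V}) : (#|S| <= 1)%N -> S \notin E.
Proof. by move=> S_le1; apply/negP => /E_hyper; rewrite ltnNge S_le1. Qed.

Lemma sigma_const_notin k (v : V) : sigma [ffun _ : 'I_k => v] \notin E.
Proof. by apply: small_notin; rewrite -(cards1 v) subset_leq_card ?sigma_const. Qed.

Lemma nonedge_mass_gt0 N : 0 < nonedge_mass N.
Proof.
have [v Pv_gt0] := exists_P_gt0 P_sum1.
apply: (Rsum_gt0 (j := [ffun _ => v])) (sigma_const_notin _ _) (Ptup_const_gt0 _ Pv_gt0).
by move=> f _; apply: Ptup_ge0.
Qed.

Lemma nonedge_mass_add_edge N : nonedge_mass N + edge_mass N = 1.
Proof.
rewrite -(sum_Ptup P_sum1 N) (bigID (fun f : {ffun 'I_N -> V} => sigma f \notin E)) /=.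
by congr Rplus; apply: eq_bigl => f; rewrite negbK.
Qed.

Lemma nonedge_mass_le1 N : nonedge_mass N <= 1.
Proof. by rewrite -(sum_Ptup P_sum1 N); apply: Rsum_le_full => f; apply: Ptup_ge0. Qed.

Lemma nonedge_ext_mass_bounds l k (a : {ffun 'I_l -> V}) : 0 <= nonedge_ext_mass k a <= 1.
Proof.
split; first by apply: Rsum_ge0 => b _; apply: Ptup_ge0.
by rewrite -(sum_Ptup P_sum1 k); apply: Rsum_le_full => b; apply: Ptup_ge0.
Qed.

Lemma nonedge_mass_cat l k :
  nonedge_mass (l + k) = \big[Rplus/0]_(a : {ffun 'I_l -> V}) (Ptup P a * nonedge_ext_mass k a).
Proof.
rewrite /nonedge_mass big_mkcond big_ffun_cat; apply: eq_bigr => a _.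
rewrite /nonedge_ext_mass big_distrr [in RHS]big_mkcond /=; apply: eq_bigr => b _.
by rewrite sigma_cat Ptup_cat; case: ifP; rewrite ?Rmult_0_r.
Qed.

Lemma nonedge_mass2_gt0 l k : 0 < nonedge_mass2 l k.
Proof.
have [v Pv_gt0] := exists_P_gt0 P_sum1.
have ext_gt0 : 0 < nonedge_ext_mass k [ffun _ : 'I_l => v].
  apply: (Rsum_gt0 (j := [ffun _ => v])) _ (Ptup_const_gt0 _ Pv_gt0).
  - by move=> b _; apply: Ptup_ge0.
  - by apply: small_notin; rewrite -(cards1 v) subset_leq_card // subUset !sigma_const.
apply: (Rsum_gt0 (j := [ffun _ => v])) => // [a _|].
  by apply: Rmult_le_pos; [apply: Ptup_ge0 | apply: pow2_ge_0].
by apply: Rmult_lt_0_compat; [apply: Ptup_const_gt0 | apply: pow_lt].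
Qed.

Lemma nonedge_mass2_bounds l k :
  nonedge_mass (l + k) ^ 2 <= nonedge_mass2 l k <= nonedge_mass (l + k).
Proof.
rewrite nonedge_mass_cat; apply: mean_sq_bounds => [a | | a].
- exact: Ptup_ge0.
- exact: sum_Ptup.
- exact: nonedge_ext_mass_bounds.
Qed.

Lemma nonedge_mass_const_multi N :
  nonedge_mass N.+1 = \big[Rplus/0]_v P v ^ N.+1 + multi_nonedge_mass N.+1.
Proof.
rewrite /nonedge_mass (bigID (fun f : {ffun 'I_N.+1 -> V} => #|sigma f| <= 1)%N).
congr Rplus; last by apply: eq_bigl => f; rewrite ltnNge.
rewrite (partition_big (fun f : {ffun 'I_N.+1 -> V} => f ord0) predT) //.
apply: eq_bigr => v _; rewrite -(Ptup_const P N.+1 v); apply: big_pred1 => f /=.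
apply/andP/eqP => [[/andP [_ /sigma_le1_const f_const] /eqP f0] | ->].
  by rewrite f_const f0.
by rewrite ffunE sigma_const_notin -(cards1 v) subset_leq_card ?sigma_const.
Qed.

Lemma edge_mass_eq0P N :
  edge_mass N = 0 <->
  forall e : {set V}, e \subset supp P -> (2 <= #|e| <= N)%N -> e \notin E.
Proof.
apply: iff_trans (mass_eq0P P_ge0 N (fun e => e \in E)) _.
apply: iff_trans (forall_sigmaP P N (fun e => e \notin E)).
split=> [no_edge f f_supp _ | no_edge f f_supp].
  exact: no_edge.
by case: (leqP #|sigma f| 1) => [/small_notin | /(no_edge f f_supp)].
Qed.

Lemma multi_nonedge_mass_eq0P N :
  multi_nonedge_mass N = 0 <->
  forall e : {set V}, e \subset supp P -> (2 <= #|e| <= N)%N -> e \in E.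
Proof.
apply: iff_trans (mass_eq0P P_ge0 N (fun e => (e \notin E) && (1 < #|e|)%N)) _.
apply: iff_trans (forall_sigmaP P N (fun e => e \in E)).
split=> no_multi f f_supp; have := no_multi f f_supp.
  by rewrite negb_and negbK => /orP [// | /negbTE ->].
by case: (1 < #|sigma f|)%N => [/(_ isT) -> | _]; rewrite ?andbF.
Qed.

Lemma I_L1E L : I_L1 E P L = - / INR L * log2 (nonedge_mass L.+1).
Proof. by []. Qed.

Lemma theta_auxE L l :
  theta_aux E P L l = 2 * I_L1 E P L + / INR L * log2 (nonedge_mass2 l (L.+1 - l)).
Proof. by []. Qed.

End NonedgeMass.

Section ConormalPower.
Local Open Scope R_scope.
Variables (V : finType) (E : {set {set V}}) (P : V -> R).
Hypothesis E_hyper : is_hypergraph E.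

Definition column k n (f : {ffun 'I_k -> {ffun 'I_n -> V}}) (t : 'I_n) : {ffun 'I_k -> V} :=
  [ffun i => f i t].

Lemma big_columns k n (F : 'I_n -> {ffun 'I_k -> V} -> R) :
  \big[Rplus/0]_(f : {ffun 'I_k -> {ffun 'I_n -> V}}) \big[Rmult/1]_t F t (column f t) =
  \big[Rmult/1]_t \big[Rplus/0]_(g : {ffun 'I_k -> V}) F t g.
Proof.
rewrite bigA_distr_bigA (reindex (fun h : {ffun 'I_n -> {ffun 'I_k -> V}} =>
                                    [ffun i => [ffun t => h t i]])).
  apply: eq_bigr => h _; apply: eq_bigr => t _; congr F.
  by apply/ffunP => i; rewrite !ffunE.
exists (fun f : {ffun 'I_k -> {ffun 'I_n -> V}} => [ffun t => column f t]) => [h _ | f _];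
  by apply/ffunP => x; apply/ffunP => y; rewrite !ffunE.
Qed.

Lemma big_columns_cond k n (p : 'I_n -> pred {ffun 'I_k -> V})
    (F : 'I_n -> {ffun 'I_k -> V} -> R) :
  \big[Rplus/0]_(f : {ffun 'I_k -> {ffun 'I_n -> V}} | [forall t, p t (column f t)])
     \big[Rmult/1]_t F t (column f t) =
  \big[Rmult/1]_t \big[Rplus/0]_(g : {ffun 'I_k -> V} | p t g) F t g.
Proof.
under [RHS]eq_bigr do rewrite big_mkcond.
by rewrite -big_columns big_mkcond; apply: eq_bigr => f _; rewrite Rprod_if.
Qed.

Lemma Ptup_pow_pmf k n (f : {ffun 'I_k -> {ffun 'I_n -> V}}) :
  Ptup (pow_pmf P n) f = \big[Rmult/1]_t Ptup P (column f t).
Proof.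
rewrite /Ptup /pow_pmf exchange_big; apply: eq_bigr => t _.
by apply: eq_bigr => i _; rewrite ffunE.
Qed.

Lemma proj_sigma k n (f : {ffun 'I_k -> {ffun 'I_n -> V}}) t :
  [set g t | g : {ffun 'I_n -> V} in sigma f] = sigma (column f t).
Proof.
apply/setP => x; apply/imsetP/imsetP => [[g /imsetP [i _ ->] ->] | [i _ ->]].
  by exists i; rewrite ?ffunE.
by exists (f i); [apply: imset_f | rewrite ffunE].
Qed.

Lemma notin_conormal_power n (S : {set {ffun 'I_n -> V}}) :
  (S \notin conormal_power E n) = [forall t, [set g t | g : {ffun 'I_n -> V} in S] \notin E].
Proof.
rewrite inE negb_and negb_exists; case: ltnP => //= S_le1; symmetry; apply/forallP => t.
by apply: small_notin; rewrite // (leq_trans (leq_imset_card _ _)).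
Qed.

Lemma nonedge_mass_power N n :
  nonedge_mass (conormal_power E n) (pow_pmf P n) N = nonedge_mass E P N ^ n.
Proof.
rewrite -Rprod_const -big_columns_cond /nonedge_mass.
apply: eq_big => [f | f _]; last exact: Ptup_pow_pmf.
by rewrite notin_conormal_power; apply: eq_forallb => t; rewrite proj_sigma.
Qed.

Lemma nonedge_ext_mass_power l k n (a : {ffun 'I_l -> {ffun 'I_n -> V}}) :
  nonedge_ext_mass (conormal_power E n) (pow_pmf P n) k a =
  \big[Rmult/1]_t nonedge_ext_mass E P k (column a t).
Proof.
rewrite -big_columns_cond /nonedge_ext_mass.
apply: eq_big => [b | b _]; last exact: Ptup_pow_pmf.
by rewrite notin_conormal_power; apply: eq_forallb => t; rewrite imsetU !proj_sigma.
Qed.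

Lemma nonedge_mass2_power l k n :
  nonedge_mass2 (conormal_power E n) (pow_pmf P n) l k = nonedge_mass2 E P l k ^ n.
Proof.
rewrite -Rprod_const -big_columns; apply: eq_bigr => a _.
rewrite nonedge_ext_mass_power Ptup_pow_pmf /= !Rmult_1_r -!big_split /=.
by apply: eq_bigr => t _; rewrite Rmult_1_r.
Qed.

End ConormalPower.

Section Information.
Local Open Scope R_scope.
Variables (V : finType) (E : {set {set V}}) (P : V -> R) (L : nat).
Hypothesis E_hyper : is_hypergraph E.
Hypothesis P_pmf : is_pmf P.
Hypothesis L_gt0 : (0 < L)%N.

Let P_ge0 := proj1 P_pmf.
Let P_sum1 := proj2 P_pmf.
Let s_gt0 := nonedge_mass_gt0 E_hyper P_ge0 P_sum1 L.+1.
Let s_le1 := nonedge_mass_le1 E P_ge0 P_sum1 L.+1.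

Let invL_gt0 : 0 < / INR L.
Proof. exact/Rinv_0_lt_compat/lt_0_INR/ltP. Qed.

Lemma renyiE : renyi P L.+1 = - / INR L * log2 (\big[Rplus/0]_v P v ^ L.+1).
Proof. by rewrite /renyi subn1. Qed.

Lemma I_L1_ge0 : 0 <= I_L1 E P L.
Proof. by rewrite I_L1E; have := log2_le0 s_gt0 s_le1; nra. Qed.

Lemma theta_bounds l : (1 <= l <= L.+1)%N -> 0 <= theta E P L l <= I_L1 E P L.
Proof.
move=> /andP [l_gt0 l_le]; rewrite /theta; case: eqP => _.
  by split; [exact: I_L1_ge0 | apply: Rle_refl].
have [sq_le_m2 m2_le] := nonedge_mass2_bounds E P_ge0 P_sum1 l (L.+1 - l).
rewrite subnKC // in sq_le_m2 m2_le.
have m2_gt0 := nonedge_mass2_gt0 E_hyper P_ge0 P_sum1 l (L.+1 - l).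
have := log2_le m2_gt0 m2_le.
have := log2_le (pow_lt _ 2 s_gt0) sq_le_m2; rewrite log2_pow //=.
by rewrite theta_auxE I_L1E; split; nra.
Qed.

Let C_gt0 : 0 < \big[Rplus/0]_v P v ^ L.+1.
Proof.
have [v Pv_gt0] := exists_P_gt0 P_sum1.
by apply: (Rsum_gt0 (j := v)) => // [w _|]; [apply: pow_le | apply: pow_lt].
Qed.

Let multi_ge0 : 0 <= multi_nonedge_mass E P L.+1.
Proof. by apply: Rsum_ge0 => f _; apply: Ptup_ge0. Qed.

Lemma I_L1_le_renyi : I_L1 E P L <= renyi P L.+1.
Proof.
rewrite I_L1E renyiE; apply: Rmult_le_compat_neg_l; first lra.
by apply: log2_le => //; rewrite nonedge_mass_const_multi //; lra.
Qed.

Lemma I_L1_eq0P :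
  I_L1 E P L = 0 <->
  forall e : {set V}, e \subset supp P -> (2 <= #|e| <= L.+1)%N -> e \notin E.
Proof.
apply: (iff_trans (B := nonedge_mass E P L.+1 = 1)).
  by rewrite I_L1E -{1}(Rmult_0_r (- / INR L)) -log2_1 scaled_log2_eqP //; lra.
by rewrite -edge_mass_eq0P //; have := nonedge_mass_add_edge E P_sum1 L.+1; lra.
Qed.

Lemma I_L1_eq_renyiP :
  I_L1 E P L = renyi P L.+1 <->
  forall e : {set V}, e \subset supp P -> (2 <= #|e| <= L.+1)%N -> e \in E.
Proof.
rewrite -multi_nonedge_mass_eq0P // I_L1E renyiE scaled_log2_eqP //; last lra.
by rewrite nonedge_mass_const_multi //; lra.
Qed.

Lemma theta_conormal_power n l :
  theta (conormal_power E n) (pow_pmf P n) L l = INR n * theta E P L l.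
Proof.
have m2_gt0 := nonedge_mass2_gt0 E_hyper P_ge0 P_sum1 l (L.+1 - l).
rewrite /theta !theta_auxE !I_L1E nonedge_mass_power // log2_pow //.
case: eqP => _; first ring.
by rewrite nonedge_mass2_power // log2_pow //; ring.
Qed.

End Information.

Theorem proposition3 (V : finType) (E : {set {set V}}) (P : V -> R) (L : nat)
  (hE : is_hypergraph E) (hP : is_pmf P) (hL : 1 <= L) :
  (* (i) *)
  (forall l : nat, 1 <= l <= L.+1 ->
     (0 <= theta E P L l /\ theta E P L l <= I_L1 E P L)%Re) /\
  (* (ii) *)
  ((0 <= I_L1 E P L /\ I_L1 E P L <= renyi P L.+1)%Re /\
   (I_L1 E P L = 0%Re <->
      forall e : {set V}, e \subset supp P -> 2 <= #|e| <= L.+1 -> e \notin E) /\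
   (I_L1 E P L = renyi P L.+1 <->
      forall e : {set V}, e \subset supp P -> 2 <= #|e| <= L.+1 -> e \in E)) /\
  (* (iii) *)
  (forall n : nat, 2 <= n -> forall l : nat, 1 <= l <= L.+1 ->
     theta (conormal_power E n) (pow_pmf P n) L l = (INR n * theta E P L l)%Re).
Proof.
split; first exact: theta_bounds.
split; last by move=> n _ l _; apply: theta_conormal_power.
split; first by split; [apply: I_L1_ge0 | apply: I_L1_le_renyi].
by split; [apply: I_L1_eq0P | apply: I_L1_eq_renyiP].
Qed.
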